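(* Assume the rank-1 setting described in the context and Assumption 3. Let $\mathcal D$ be a (possibly random) collection of subsets of $V$ with $r^{1/3}\le|D|\le r$ for all $D\in\mathcal D$. Suppose that, under $\mathbb{P}_0$, \[ \frac{e(V)}{\mathbb{E}_0[e(V)]}\to1\quad\text{and}\quad\sup_{D\in\mathcal D}\Big|\frac{e(D,-D)}{\mathbb{E}_0[e(D,-D)]}-1\Big|\to0\quad\text{in probability}. \] Then \[ \sup_{D\in\mathcal D}\Big|\frac{\widehat E_D}{\mathbb{E}_0[e(D)]}-1\Big|\to0\quad\text{in }\mathbb{P}_0\text{-probability}. \] The same statement holds with $\mathbb{P}_0$ replaced by $\mathbb{P}_C$ in both hypothesis and conclusion, for any $C\subseteq V$ with $|C|=r$. The expectations $\mathbb{E}_0[\cdot]$ are kept as they are.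
   Context: Rank-1 setting. For each $n$ let $V=\{1,\dots,n\}$ with vertex weights $\theta_i\in(0,1)$ and edge probabilities $p_{ij}=\theta_i\theta_j$ ($i\ne j$). Let $r=r_n$ be a community size, and for each $C$ with $|C|=r$ let $\rho_C>1$ with $\rho_Cp_{ij}\le1$ for $i,j\in C$. A simple undirected random graph on $V$ has adjacency matrix $A$. Under $\mathbb{P}_0$ the $A_{ij}$ ($i<j$) are independent $\mathrm{Bern}(p_{ij})$. Under $\mathbb{P}_C$ they are independent with $A_{ij}\sim\mathrm{Bern}(\rho_Cp_{ij})$ for $i,j\in C$ and $\mathrm{Bern}(p_{ij})$ otherwise. $\mathbb{E}_0$ is the null expectation. All quantities may depend on $n$, and limits are as $n\to\infty$. Notation. $e(D)=\sum_{i<j,\ i,j\in D}A_{ij}$ and $e(D,-D)=\sum_{i\in D,j\notin D}A_{ij}$. $\widehat E_D=\tfrac14\big(\sqrt{e(V)}-\sqrt{e(V)-2e(D,-D)}\big)^2$. Assumption 3. $(\theta_{\max}/\theta_{\min})^2=o\big(r^{2/3}\wedge\frac nr\theta_{\min}^2\big)$, where $\theta_{\max}=\max_i\theta_i$ and $\theta_{\min}=\min_i\theta_i$. *)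

From HB Require Import structures.
From mathcomp Require Import all_boot all_order all_algebra.
From mathcomp Require Import all_classical all_reals all_analysis.
Set Implicit Arguments. Unset Strict Implicit. Unset Printing Implicit Defensive.
Import Order.TTheory GRing.Theory Num.Theory.
Local Open Scope classical_set_scope.
Local Open Scope ring_scope.

(* A simple graph on V = 'I_n is encoded by the states of the pairs (i,j);
   only the pairs with i < j are meaningful (A_{ij}, i<j); entries with
   i >= j are forced to be false by the probability measures below. *)
Definition graph (n : nat) := {ffun 'I_n * 'I_n -> bool}.

Definition adj n (g : graph n) (i j : 'I_n) : bool :=
  if (i < j)%N then g (i, j) else if (j < i)%N then g (j, i) else false.

Section Model.
Variable R : realType.

Definition weight n (q : 'I_n -> 'I_n -> R) (g : graph n) : R :=
  \prod_(ij : 'I_n * 'I_n)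
     (if (ij.1 < ij.2)%N then (if g ij then q ij.1 ij.2 else 1 - q ij.1 ij.2)
      else (if g ij then 0 else 1)).

Definition Prob n (q : 'I_n -> 'I_n -> R) (E : pred (graph n)) : R :=
  \sum_(g : graph n | E g) weight q g.

Definition Ex n (q : 'I_n -> 'I_n -> R) (X : graph n -> R) : R :=
  \sum_(g : graph n) weight q g * X g.

Definition p0 n (theta : 'I_n -> R) (i j : 'I_n) : R := theta i * theta j.

Definition pC n (theta : 'I_n -> R) (rho : R) (C : {set 'I_n}) (i j : 'I_n) : R :=
  if (i \in C) && (j \in C) then rho * (theta i * theta j) else theta i * theta j.

Definition eD n (g : graph n) (D : {set 'I_n}) : R :=
  \sum_(i in D) \sum_(j in D | (i < j)%N) (adj g i j)%:R.

Definition eDc n (g : graph n) (D : {set 'I_n}) : R :=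
  \sum_(i in D) \sum_(j in ~: D) (adj g i j)%:R.

Definition Ehat n (g : graph n) (D : {set 'I_n}) : R :=
  4^-1 * (Num.sqrt (eD g [set: 'I_n]) - Num.sqrt (eD g [set: 'I_n] - 2 * eDc g D)) ^+ 2.

Definition theta_max n (theta : 'I_n -> R) : R := \big[Num.max/0]_i theta i.
Definition theta_min n (theta : 'I_n -> R) : R := \big[Num.min/1]_i theta i.

Definition cvg_in_prob (q : forall n, 'I_n -> 'I_n -> R)
    (Y : forall n, graph n -> R) (c : R) : Prop :=
  forall eps : R, 0 < eps ->
    (fun n => Prob (q n) (fun g => eps < `|Y n g - c|)) @ \oo --> (0 : R^o).

(* sup over a finite (random) collection of nonnegative quantities *)
Definition supD n (Dcol : {set {set 'I_n}}) (f : {set 'I_n} -> R) : R :=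
  \big[Num.max/0]_(D in Dcol) f D.

End Model.

Arguments eD {R n} g D.
Arguments eDc {R n} g D.
Arguments Ehat {R n} g D.

From HB Require Import structures.
From mathcomp Require Import all_boot all_order all_algebra.
From mathcomp Require Import all_classical all_reals all_analysis.
From mathcomp Require Import ring lra.
Set Implicit Arguments. Unset Strict Implicit. Unset Printing Implicit Defensive.
Import Order.TTheory GRing.Theory Num.Theory.
Local Open Scope ring_scope.

(* Write S, T for the sums of the weights over V and over D, and Q, Q_D for
   the sums of their squares.  Under P_0, E e(V) = (S^2 - Q)/2,
   E e(D,-D) = T (S - T) and E e(D) = (T^2 - Q_D)/2, and Assumption 3 makes
   Q/S^2, T/S and Q_D/T^2 small uniformly over the admissible D.  Since
   (sqrt x - sqrt (x - 2y))^2 / 4 = y^2 / (sqrt x + sqrt (x - 2y))^2, the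
   values x ~ S^2/2 and y ~ T S give Ehat_D ~ T^2/2 ~ E e(D): if e(V) and every
   e(D,-D) are within relative error d of their null means, then every Ehat_D is
   within relative error 20 d of E e(D).  A union bound turns this into
   convergence in probability under any law of independent edges, which gives
   the statements under P_0 and under P_C alike. *)

Section FiniteGraphLaw.
Variables (R : realType) (n : nat) (q : 'I_n -> 'I_n -> R).

Section Nonnegative.
Hypothesis q01 : forall i j : 'I_n, (i < j)%N -> 0 <= q i j <= 1.

Lemma weight_ge0 (g : graph n) : 0 <= weight q g.
Proof.
apply: prodr_ge0 => -[i j] _ /=; case: ifP => [/q01/andP[q0 q1]|_]; case: (g _) => //.
by rewrite subr_ge0.
Qed.

Lemma Prob_ge0 (E : pred (graph n)) : 0 <= Prob q E.
Proof. by apply: sumr_ge0 => g _; exact: weight_ge0. Qed.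

Lemma Prob_le_union (E E1 E2 : pred (graph n)) :
  (forall g, E g -> E1 g || E2 g) -> Prob q E <= Prob q E1 + Prob q E2.
Proof.
move=> sub; rewrite /Prob big_mkcond [X in _ <= X + _]big_mkcond.
rewrite [X in _ <= _ + X]big_mkcond -big_split /=.
apply: ler_sum => g _; have w0 := weight_ge0 g.
case: (boolP (E g)) => [/sub|_]; last by case: (E1 g); case: (E2 g); rewrite ?addr0 ?addr_ge0.
by case: (E1 g); case: (E2 g) => //= _; rewrite ?addr0 ?add0r ?lerDl.
Qed.

End Nonnegative.

Lemma Ex_sum (I : finType) (P : pred I) (f : I -> graph n -> R) :
  Ex q (fun g => \sum_(i | P i) f i g) = \sum_(i | P i) Ex q (f i).
Proof. by rewrite /Ex; under eq_bigr do rewrite mulr_sumr; rewrite exchange_big. Qed.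

Lemma Ex_edge (e : 'I_n * 'I_n) : (e.1 < e.2)%N -> Ex q (fun g => (g e)%:R) = q e.1 e.2.
Proof.
move=> lt_e.
(* A sum over graphs of a product over pairs is a product over pairs of a sum over two states. *)
pose F (ij : 'I_n * 'I_n) (b : bool) : R :=
  (if (ij.1 < ij.2)%N then (if b then q ij.1 ij.2 else 1 - q ij.1 ij.2) else (if b then 0 else 1))
  * (if ij == e then (b : nat)%:R else 1).
have -> : Ex q (fun g => (g e)%:R) = \sum_(g : {ffun _ -> bool}) \prod_ij F ij (g ij).
  apply: eq_bigr => g _; rewrite /F big_split /=; congr (_ * _).
  by rewrite (bigD1 e) //= eqxx big1 ?mulr1 // => ij /negbTE ->.
rewrite -bigA_distr_bigA (bigD1 e) //= [X in _ * X]big1 ?mulr1.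
  by rewrite big_bool /F /= lt_e eqxx mulr1 mulr0 addr0.
move=> ij /negbTE ne_ij; rewrite big_bool /F ne_ij !mulr1.
by case: ifP => _ /=; rewrite ?add0r // addrC subrK.
Qed.

Hypothesis qC : forall i j, q i j = q j i.

Lemma Ex_adj (i j : 'I_n) : i != j -> Ex q (fun g => (adj g i j)%:R) = q i j.
Proof.
rewrite /adj; case: ltngtP => [lt_ij|lt_ji|/val_inj->]; last by rewrite eqxx.
- by rewrite (Ex_edge (e := (i, j))).
- by rewrite (Ex_edge (e := (j, i))) // qC.
Qed.

Lemma Ex_eD (D : {set 'I_n}) :
  Ex q (fun g => eD g D) = \sum_(i in D) \sum_(j in D | (i < j)%N) q i j.
Proof.
rewrite /eD Ex_sum; apply: eq_bigr => i _; rewrite Ex_sum.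
by apply: eq_bigr => j /andP[_ lt_ij]; rewrite Ex_adj // neq_ltn lt_ij.
Qed.

Lemma Ex_eDc (D : {set 'I_n}) :
  Ex q (fun g => eDc g D) = \sum_(i in D) \sum_(j in ~: D) q i j.
Proof.
rewrite /eDc Ex_sum; apply: eq_bigr => i iD; rewrite Ex_sum.
by apply: eq_bigr => j; rewrite inE => jD; rewrite Ex_adj //; apply: contraNneq jD => <-.
Qed.

End FiniteGraphLaw.

Lemma sum_pairs_mul (R : comRingType) n (f : 'I_n -> R) (D : {set 'I_n}) :
  2 * (\sum_(i in D) \sum_(j in D | (i < j)%N) f i * f j)
  = (\sum_(i in D) f i) ^+ 2 - \sum_(i in D) f i ^+ 2.
Proof.
have split_row i : i \in D -> \sum_(j in D) f i * f j =
   \sum_(j in D | (i < j)%N) f i * f j + \sum_(j in D | (j < i)%N) f i * f j + f i ^+ 2.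
  move=> iD; rewrite (bigID (fun j : 'I_n => (i < j)%N)) /= -addrA; congr (_ + _).
  rewrite (bigD1 i) /=; last by rewrite iD ltnn.
  rewrite addrC expr2; congr (_ + _); apply: eq_bigl => j.
  by rewrite -andbA; case: (j \in D) => //=; rewrite -leqNgt ltn_neqAle andbC.
have swap : \sum_(i in D) \sum_(j in D | (j < i)%N) f i * f j =
            \sum_(i in D) \sum_(j in D | (i < j)%N) f i * f j.
  rewrite (exchange_big_dep (fun j => j \in D)) /=; last by move=> ? ? _ /andP[].
  by apply: eq_bigr => j jD; apply: eq_big => [i|i _]; rewrite ?jD // mulrC.
have square : (\sum_(i in D) f i) ^+ 2 = \sum_(i in D) \sum_(j in D) f i * f j.
  by rewrite expr2 big_distrl; apply: eq_bigr => i _; rewrite big_distrr.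
by rewrite square (eq_bigr _ split_row) !big_split /= swap; ring.
Qed.

Section NullExpectations.
Variables (R : realType) (n : nat) (th : 'I_n -> R).

Lemma Ex_eD_p0 (D : {set 'I_n}) :
  Ex (p0 th) (fun g => eD g D) = ((\sum_(i in D) th i) ^+ 2 - \sum_(i in D) th i ^+ 2) / 2.
Proof.
rewrite Ex_eD => [|i j]; last exact: mulrC.
by rewrite -sum_pairs_mul [2 * _]mulrC mulfK ?pnatr_eq0.
Qed.

Lemma Ex_eDc_p0 (D : {set 'I_n}) :
  Ex (p0 th) (fun g => eDc g D) =
  (\sum_(i in D) th i) * (\sum_(i in [set: 'I_n]) th i - \sum_(i in D) th i).
Proof.
rewrite Ex_eDc => [|i j]; last exact: mulrC.
rewrite [\sum_(i in [set: 'I_n]) _](big_setID D) finset.setTI finset.setTD addrAC subrr add0r.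
by rewrite mulr_suml; apply: eq_bigr => i _; rewrite mulr_sumr.
Qed.

End NullExpectations.

Section SqrtGap.
Variable R : realType.
Implicit Types a d u x y S T Q : R.

Lemma rel_err_le u a d : 0 < a ->
  (`|u / a - 1| <= d) = ((1 - d) * a <= u <= (1 + d) * a).
Proof.
move=> a0; have -> : u / a - 1 = (u - a) / a by rewrite mulrBl divff ?lt0r_neq0.
rewrite normrM normfV (gtr0_norm a0) ler_pdivrMr // ler_norml.
by apply/andP/andP => -[lo hi]; split; lra.
Qed.

Definition sqrt_gap x y := 4^-1 * (Num.sqrt x - Num.sqrt (x - 2 * y)) ^+ 2.

Lemma sqrt_gap_bounds {x y} : 0 <= y -> 2 * y <= x ->
  sqrt_gap x y * (4 * x - 6 * y) <= y ^+ 2 <= sqrt_gap x y * (4 * x - 2 * y).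
Proof.
move=> y0 le_2y_x; rewrite /sqrt_gap.
set p := Num.sqrt x; set s := Num.sqrt (x - 2 * y).
have p0 : 0 <= p by exact: sqrtr_ge0.
have s0 : 0 <= s by exact: sqrtr_ge0.
have pp : p ^+ 2 = x by rewrite sqr_sqrtr //; lra.
have ss : s ^+ 2 = x - 2 * y by rewrite sqr_sqrtr //; lra.
have le_sp : s <= p by rewrite ler_sqrt //; lra.
(* (p - s) (p + s) = 2 y, and (p + s)^2 = 2 x - 2 y + 2 p s with s^2 <= p s <= p^2. *)
have -> : y ^+ 2 = 4^-1 * (p - s) ^+ 2 * (p + s) ^+ 2.
  have ey : y = (p ^+ 2 - s ^+ 2) / 2 by rewrite pp ss; field.
  by rewrite [in LHS]ey; field.
have E0 : 0 <= 4^-1 * (p - s) ^+ 2 by rewrite mulr_ge0 ?sqr_ge0 ?invr_ge0.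
by rewrite !ler_wpM2l //; nra.
Qed.

Lemma sqrt_gap_ge {d x y S T} : 0 <= d <= 1 / 20 -> 0 < S -> 0 <= T ->
  2 * x <= (1 + d) * S ^+ 2 -> (1 - d) ^+ 2 * (T * S) <= y -> 2 * y <= x ->
  (1 - 20 * d) * (T ^+ 2 / 2) <= sqrt_gap x y.
Proof.
move=> /andP[d0 d1] S0 T0 x_hi y_lo le_2y_x.
have TS0 : 0 <= T * S by rewrite mulr_ge0 ?(ltW S0).
have y0 : 0 <= y by rewrite (le_trans _ y_lo) // mulr_ge0 ?sqr_ge0.
have /andP[_ y2_hi] := sqrt_gap_bounds y0 le_2y_x.
have E0 : 0 <= sqrt_gap x y by rewrite mulr_ge0 ?sqr_ge0 ?invr_ge0.
have y2_lo : (1 - d) ^+ 4 * (T ^+ 2 * S ^+ 2) <= y ^+ 2.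
  have -> : (1 - d) ^+ 4 * (T ^+ 2 * S ^+ 2) = ((1 - d) ^+ 2 * (T * S)) ^+ 2 by ring.
  by rewrite ler_sqr ?nnegrE // mulr_ge0 ?sqr_ge0.
have S2_0 : 0 < S ^+ 2 by rewrite exprn_gt0.
have : (1 - d) ^+ 4 * T ^+ 2 * S ^+ 2 <= sqrt_gap x y * (2 * (1 + d)) * S ^+ 2.
  have : sqrt_gap x y * (4 * x - 2 * y) <= sqrt_gap x y * (2 * (1 + d) * S ^+ 2).
    by rewrite ler_wpM2l //; lra.
  nra.
rewrite ler_pM2r // => T2_le.
have : (1 - 20 * d) * (1 + d) <= (1 - d) ^+ 4 by nra.
have T2_0 : 0 <= T ^+ 2 by exact: sqr_ge0.
nra.
Qed.

Lemma sqrt_gap_le {d x y S T} : 0 <= d <= 1 / 20 -> 0 < S -> 0 <= T -> T <= d * S ->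
  (1 - d) ^+ 2 * S ^+ 2 <= 2 * x -> 0 <= y <= (1 + d) * (T * S) ->
  sqrt_gap x y <= (1 + 20 * d) * ((1 - d) * T ^+ 2 / 2).
Proof.
move=> /andP[d0 d1] S0 T0 le_TS x_lo /andP[y0 y_hi].
have S2_0 : 0 < S ^+ 2 by rewrite exprn_gt0.
have y_hi' : y <= (1 + d) * d * S ^+ 2 by nra.
have le_2y_x : 2 * y <= x by nra.
have /andP[y2_lo _] := sqrt_gap_bounds y0 le_2y_x.
have E0 : 0 <= sqrt_gap x y by rewrite mulr_ge0 ?sqr_ge0 ?invr_ge0.
set L := 2 - 10 * d - 4 * d ^+ 2.
have L0 : 0 < L by rewrite /L; nra.
have : sqrt_gap x y * L * S ^+ 2 <= (1 + d) ^+ 2 * T ^+ 2 * S ^+ 2.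
  have : sqrt_gap x y * (S ^+ 2 * L) <= sqrt_gap x y * (4 * x - 6 * y).
    by rewrite ler_wpM2l // /L; nra.
  have : y ^+ 2 <= ((1 + d) * (T * S)) ^+ 2 by rewrite ler_sqr ?nnegrE //; nra.
  rewrite !exprMn; nra.
rewrite ler_pM2r // => EL.
have poly : 2 * (1 + d) ^+ 2 <= (1 + 20 * d) * (1 - d) * L by rewrite /L; nra.
have := ler_wpM2r (sqr_ge0 T) poly.
rewrite -(ler_pM2r L0); nra.
Qed.

Lemma sqrt_gap_rel_err d x y S T Q QD : 0 < d -> d <= 1 / 20 -> 0 < S -> 0 < T ->
  0 <= Q <= d * S ^+ 2 -> T <= d * S -> 0 <= QD <= d * T ^+ 2 ->
  `|x / ((S ^+ 2 - Q) / 2) - 1| <= d -> `|y / (T * (S - T)) - 1| <= d ->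
  `|sqrt_gap x y / ((T ^+ 2 - QD) / 2) - 1| <= 20 * d.
Proof.
move=> d0 d1 S0 T0 /andP[Q0 Q_hi] le_TS /andP[QD0 QD_hi] x_err y_err.
have d01 : 0 <= d <= 1 / 20 by rewrite (ltW d0).
have S2_0 : 0 < S ^+ 2 by rewrite exprn_gt0.
have T2_0 : 0 < T ^+ 2 by rewrite exprn_gt0.
have TS0 : 0 < T * S by rewrite mulr_gt0.
have a0 : 0 < (S ^+ 2 - Q) / 2 by rewrite divr_gt0 //; nra.
have b0 : 0 < T * (S - T) by rewrite mulr_gt0 //; nra.
have c0 : 0 < (T ^+ 2 - QD) / 2 by rewrite divr_gt0 //; nra.
move: x_err y_err; rewrite !rel_err_le // => /andP[x_lo x_hi] /andP[y_lo y_hi].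
have x_lo' : (1 - d) ^+ 2 * S ^+ 2 <= 2 * x by nra.
have x_hi' : 2 * x <= (1 + d) * S ^+ 2 by nra.
have y_lo' : (1 - d) ^+ 2 * (T * S) <= y.
  have : (1 - d) * (T * T) <= (1 - d) * (d * S * T).
    by rewrite ler_wpM2l ?ler_wpM2r ?(ltW T0) //; lra.
  nra.
have y_hi' : 0 <= y <= (1 + d) * (T * S) by apply/andP; split; nra.
have le_2y_x : 2 * y <= x.
  have : T * S <= d * S ^+ 2 by rewrite expr2 mulrA ler_wpM2r ?(ltW S0).
  nra.
apply/andP; split.
- apply: le_trans _ (sqrt_gap_ge d01 S0 (ltW T0) x_hi' y_lo' le_2y_x).
  by rewrite ler_wpM2l //; nra.
- apply: le_trans (sqrt_gap_le d01 S0 (ltW T0) le_TS x_lo' y_hi') _.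
  by rewrite ler_wpM2l //; nra.
Qed.

End SqrtGap.

Section WeightSums.
Variables (R : realType) (n : nat) (th : 'I_n -> R).
Hypothesis th01 : forall i, 0 < th i < 1.

Let tM := theta_max th.
Let tm := theta_min th.

Lemma theta_max_ge i : th i <= tM.
Proof. exact: le_bigmax. Qed.

Lemma theta_min_le i : tm <= th i.
Proof. exact: bigmin_le. Qed.

Lemma theta_min_gt0 : 0 < tm.
Proof.
rewrite /tm /theta_min; elim/big_ind: _ => // [u v u0 v0|i _]; first by rewrite lt_min u0 v0.
by case/andP: (th01 i).
Qed.

Lemma card_mul_theta_min_le_sum (D : {set 'I_n}) : #|D|%:R * tm <= \sum_(i in D) th i.
Proof.
rewrite -sum1_card natr_sum mulr_suml; apply: ler_sum => i _.
by rewrite mul1r theta_min_le.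
Qed.

Lemma sum_le_card_mul_theta_max (D : {set 'I_n}) : \sum_(i in D) th i <= #|D|%:R * tM.
Proof.
rewrite -sum1_card natr_sum mulr_suml; apply: ler_sum => i _.
by rewrite mul1r theta_max_ge.
Qed.

Lemma sum_sqr_le_theta_max (D : {set 'I_n}) :
  \sum_(i in D) th i ^+ 2 <= tM * \sum_(i in D) th i.
Proof.
rewrite mulr_sumr; apply: ler_sum => i _.
by rewrite expr2 ler_wpM2r ?theta_max_ge // ltW; case/andP: (th01 i).
Qed.

Section Assumption3.
Variables (r : nat) (eta : R).
Hypotheses (n_gt0 : (0 < n)%N) (eta0 : 0 < eta) (eta1 : eta <= 1).
Hypothesis A3 : (tM / tm) ^+ 2
  <= eta ^+ 2 * Num.min ((r%:R : R) `^ (2 / 3)) ((n%:R / r%:R) * tm ^+ 2).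

Let i0 : 'I_n := Ordinal n_gt0.
Let tm0 : 0 < tm := theta_min_gt0.
Let tm_le_tM : tm <= tM := le_trans (theta_min_le i0) (theta_max_ge i0).
Let tM0 : 0 <= tM := le_trans (ltW tm0) tm_le_tM.
Let ratio_ge1 : 1 <= tM / tm.
Proof. by rewrite ler_pdivlMr // mul1r. Qed.

Let A3_cuberoot : (tM / tm) ^+ 2 <= eta ^+ 2 * (r%:R : R) `^ (2 / 3).
Proof. by apply: le_trans A3 _; rewrite ler_wpM2l ?sqr_ge0 // ge_min lexx. Qed.

Let A3_density : (tM / tm) ^+ 2 <= eta ^+ 2 * ((n%:R / r%:R) * tm ^+ 2).
Proof. by apply: le_trans A3 _; rewrite ler_wpM2l ?sqr_ge0 // ge_min lexx orbT. Qed.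

(* With n/r read as n/0 = 0, r = 0 would force (tM / tm)^2 <= 0. *)
Lemma A3_r_gt0 : (0 < r)%N.
Proof.
move: A3_density.
case: (r) => [|//]; rewrite invr0 mulr0 mul0r mulr0 => ratio2_le0.
by have := lt_le_trans (exprn_gt0 2 (lt_le_trans ltr01 ratio_ge1)) ratio2_le0; rewrite ltxx.
Qed.

Lemma A3_theta_max_le_cuberoot : tM <= eta * (r%:R `^ 3^-1) * tm.
Proof.
have cube : (r%:R : R) `^ (2 / 3) = (r%:R `^ 3^-1) ^+ 2.
  by rewrite -powR_mulrn ?powR_ge0 // -powRrM mulrC.
move: A3_cuberoot.
have ratio0 : 0 <= tM / tm by rewrite divr_ge0 // ltW.
have rhs0 : 0 <= eta * r%:R `^ 3^-1 by rewrite mulr_ge0 ?powR_ge0 // ltW.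
by rewrite cube -exprMn ler_pXn2r // ler_pdivrMr.
Qed.

Lemma A3_theta_max_mul_r_le : tM * r%:R <= eta * n%:R * tm.
Proof.
have r0 : 0 < (r%:R : R) by rewrite ltr0n A3_r_gt0.
have tm1 : tm <= 1 by rewrite (le_trans (theta_min_le i0)) // ltW //; case/andP: (th01 i0).
have ratio2 : (tM / tm) ^+ 2 * r%:R <= eta ^+ 2 * n%:R.
  rewrite -ler_pdivlMr // -mulrA; apply: le_trans A3_density _.
  by rewrite ler_wpM2l ?sqr_ge0 // ler_piMr ?divr_ge0 // expr_le1 // ltW.
have ratio_r : tM / tm * r%:R <= eta * n%:R.
  apply: le_trans (le_trans _ ratio2) _.
  - by rewrite ler_wpM2r ?ler0n // expr2 ler_peMl // (le_trans ler01).
  - by rewrite ler_wpM2r ?ler0n // expr2 ler_piMl // ltW.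
by rewrite mulrAC ler_pdivrMr in ratio_r.
Qed.

Lemma A3_sum_bounds (D : {set 'I_n}) :
  (r%:R : R) `^ 3^-1 <= #|D|%:R -> (#|D| <= r)%N ->
  let S := \sum_(i in [set: 'I_n]) th i in let T := \sum_(i in D) th i in
  [/\ 0 < S, 0 < T, \sum_(i in [set: 'I_n]) th i ^+ 2 <= eta * S ^+ 2,
      T <= eta * S & \sum_(i in D) th i ^+ 2 <= eta * T ^+ 2].
Proof.
move=> cuberoot_le_D D_le_r S T.
have r0 : 0 < (r%:R : R) by rewrite ltr0n A3_r_gt0.
have D0 : 0 < (#|D|%:R : R) by apply: lt_le_trans cuberoot_le_D; rewrite powR_gt0.
have S_ge : n%:R * tm <= S.
  by have := card_mul_theta_min_le_sum [set: 'I_n]; rewrite cardsT card_ord.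
have T_ge : #|D|%:R * tm <= T := card_mul_theta_min_le_sum D.
have S0 : 0 < S by apply: lt_le_trans S_ge; rewrite mulr_gt0 ?ltr0n.
have T0 : 0 < T by apply: lt_le_trans T_ge; rewrite mulr_gt0.
have tM_le_S : tM <= eta * S.
  apply: (@le_trans _ _ (eta * n%:R * tm)); last by rewrite -mulrA ler_wpM2l ?(ltW eta0).
  by apply: le_trans _ A3_theta_max_mul_r_le; rewrite ler_peMr // ler1n A3_r_gt0.
have tM_le_T : tM <= eta * T.
  apply: le_trans A3_theta_max_le_cuberoot _; rewrite -mulrA ler_wpM2l ?(ltW eta0) //.
  by apply: le_trans _ T_ge; rewrite ler_wpM2r ?(ltW tm0).
split=> //.
- apply: le_trans (sum_sqr_le_theta_max _) _.
  by rewrite expr2 mulrA ler_wpM2r ?(ltW S0).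
- apply: le_trans (sum_le_card_mul_theta_max D) _.
  apply: (@le_trans _ _ (tM * r%:R)); first by rewrite mulrC ler_wpM2l ?ler_nat.
  apply: le_trans A3_theta_max_mul_r_le _.
  by rewrite -mulrA ler_wpM2l ?(ltW eta0).
- apply: le_trans (sum_sqr_le_theta_max _) _.
  by rewrite expr2 mulrA ler_wpM2r ?(ltW T0).
Qed.

End Assumption3.
End WeightSums.

Section Supremum.
Variables (R : realType) (n : nat) (Dcol : {set {set 'I_n}}) (f : {set 'I_n} -> R).

Lemma supD_ge0 : 0 <= supD Dcol f.
Proof. exact: bigmax_ge_id. Qed.

Lemma le_supD D : D \in Dcol -> f D <= supD Dcol f.
Proof. exact: le_bigmax_cond. Qed.

Lemma supD_le c : 0 <= c -> (forall D, D \in Dcol -> f D <= c) -> supD Dcol f <= c.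
Proof. exact: bigmax_le. Qed.

End Supremum.

Section GoodEvent.
Variables (R : realType) (n : nat) (th : 'I_n -> R) (r : nat) (d : R).
Hypothesis th01 : forall i, 0 < th i < 1.
Hypotheses (n_gt0 : (0 < n)%N) (d0 : 0 < d) (d1 : d <= 1 / 20).
Hypothesis A3 : (theta_max th / theta_min th) ^+ 2
  <= d ^+ 2 * Num.min ((r%:R : R) `^ (2 / 3)) ((n%:R / r%:R) * theta_min th ^+ 2).

Let rel_err (X : graph n -> R) (g : graph n) := `|X g / Ex (p0 th) X - 1|.

Lemma Ehat_rel_err (g : graph n) (D : {set 'I_n}) :
  (r%:R : R) `^ 3^-1 <= #|D|%:R -> (#|D| <= r)%N ->
  rel_err (eD^~ [set: 'I_n]) g <= d -> rel_err (eDc^~ D) g <= d ->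
  `|Ehat g D / Ex (p0 th) (eD^~ D) - 1| <= 20 * d.
Proof.
move=> cuberoot_le_D D_le_r; rewrite /rel_err !Ex_eD_p0 Ex_eDc_p0.
have -> : Ehat g D = sqrt_gap (eD g [set: 'I_n]) (eDc g D) by [].
have d_le1 : d <= 1 by apply: le_trans d1 _; rewrite ler_pdivrMr // mul1r ler1n.
have [S0 T0 Q_le T_le QD_le] := A3_sum_bounds th01 n_gt0 d0 d_le1 A3 cuberoot_le_D D_le_r.
by apply: sqrt_gap_rel_err; rewrite ?sumr_ge0 // => i _; exact: sqr_ge0.
Qed.

Lemma sup_Ehat_rel_err_le (Dcol : {set {set 'I_n}}) (g : graph n) :
  (forall D, D \in Dcol -> (r%:R : R) `^ 3^-1 <= #|D|%:R /\ (#|D| <= r)%N) ->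
  rel_err (eD^~ [set: 'I_n]) g <= d ->
  supD Dcol (fun D => rel_err (eDc^~ D) g) <= d ->
  supD Dcol (fun D => `|Ehat g D / Ex (p0 th) (eD^~ D) - 1|) <= 20 * d.
Proof.
move=> HD x_err sup_err; apply: supD_le => [|D DinD]; first by rewrite mulr_ge0 // ltW.
have [cuberoot_le_D D_le_r] := HD D DinD.
apply: Ehat_rel_err => //; apply: le_trans sup_err.
exact: (le_supD (fun D => rel_err (eDc^~ D) g) DinD).
Qed.

End GoodEvent.

Local Open Scope classical_set_scope.

Lemma cvg_in_prob_of_good_events (R : realType) (q : forall n, 'I_n -> 'I_n -> R)
    (X Y Z : forall n, graph n -> R) (a b c : R) :
  (forall n (i j : 'I_n), (i < j)%N -> 0 <= q n i j <= 1) ->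
  cvg_in_prob q X a -> cvg_in_prob q Y b ->
  (forall eps : R, 0 < eps -> exists2 d : R, 0 < d & \forall n \near \oo, forall g,
     `|X n g - a| <= d -> `|Y n g - b| <= d -> `|Z n g - c| <= eps) ->
  cvg_in_prob q Z c.
Proof.
move=> q01 X_cvg Y_cvg good eps eps0; have [d d0 good_d] := good eps eps0.
apply: (@squeeze_cvgr _ _ _ R (fun=> 0) (fun n =>
  Prob (q n) (fun g => d < `|X n g - a|) + Prob (q n) (fun g => d < `|Y n g - b|))).
- apply: filterS good_d => n good_n; rewrite (Prob_ge0 (q01 n)) /=.
  apply: (Prob_le_union (q01 n)) => g /=; apply: contraTT.
  by rewrite negb_or -!leNgt => /andP[]; exact: good_n.
- exact (@cvg_cst R^o 0 nat \oo _).
- have := cvgD (X_cvg d d0) (Y_cvg d d0); rewrite addr0 => lim; exact: lim.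
Qed.

Lemma Ehat_cvg_in_prob (R : realType) (theta : forall n, 'I_n -> R) (r : nat -> nat)
  (Dcol : forall n, graph n -> {set {set 'I_n}}) (q : forall n, 'I_n -> 'I_n -> R) :
  (forall n (i : 'I_n), 0 < theta n i < 1) ->
  (forall n (i j : 'I_n), (i < j)%N -> 0 <= q n i j <= 1) ->
  (forall eps : R, 0 < eps -> \forall n \near \oo,
     (theta_max (theta n) / theta_min (theta n)) ^+ 2
       <= eps * Num.min ((r n)%:R `^ (2 / 3)) ((n%:R / (r n)%:R) * theta_min (theta n) ^+ 2)) ->
  (forall n (g : graph n) (D : {set 'I_n}), D \in Dcol n g ->
     ((r n)%:R : R) `^ 3^-1 <= #|D|%:R /\ (#|D| <= r n)%N) ->
  cvg_in_prob q (fun n g => eD g [set: 'I_n] / Ex (p0 (theta n)) (fun g' => eD g' [set: 'I_n])) 1 ->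
  cvg_in_prob q (fun n g => supD (Dcol n g) (fun D =>
     `|eDc g D / Ex (p0 (theta n)) (eDc^~ D) - 1|)) 0 ->
  cvg_in_prob q (fun n g => supD (Dcol n g) (fun D =>
     `|Ehat g D / Ex (p0 (theta n)) (eD^~ D) - 1|)) 0.
Proof.
move=> th01 q01 HA3 HD x_cvg sup_cvg.
apply: cvg_in_prob_of_good_events q01 x_cvg sup_cvg _ => eps eps0.
pose d := Num.min eps 1 / 20.
have min0 : 0 < Num.min eps 1 by rewrite lt_min eps0 ltr01.
have d0 : 0 < d by rewrite divr_gt0.
have d1 : d <= 1 / 20 by rewrite ler_pM2r // ge_min lexx orbT.
have d_eps : 20 * d <= eps by rewrite mulrC divfK // ge_min lexx.
exists d => //.
apply: filterS2 (HA3 _ (exprn_gt0 2 d0)) (nbhs_infty_gt 0) => n A3 n_gt0 g x_err.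
rewrite !subr0 !(ger0_norm (supD_ge0 _ _)) => sup_err.
exact: le_trans (sup_Ehat_rel_err_le (th01 n) n_gt0 d0 d1 A3 (HD n g) x_err sup_err) d_eps.
Qed.

Section EdgeProbabilities.
Variables (R : realType) (n : nat) (th : 'I_n -> R).
Hypothesis th01 : forall i, 0 < th i < 1.

Lemma p0_in01 (i j : 'I_n) : 0 <= p0 th i j <= 1.
Proof.
have /andP[ti0 ti1] := th01 i; have /andP[tj0 tj1] := th01 j.
by rewrite /p0 mulr_ge0 ?mulr_ile1 // ltW.
Qed.

Lemma pC_in01 (rho : R) (C : {set 'I_n}) (i j : 'I_n) : 1 < rho ->
  (forall i j, i \in C -> j \in C -> i != j -> rho * (th i * th j) <= 1) ->
  i != j -> 0 <= pC th rho C i j <= 1.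
Proof.
move=> rho1 rhoC_le1 neq_ij; rewrite /pC; case: ifP => [/andP[iC jC]|_]; last exact: p0_in01.
have /andP[p0_ge0 _] := p0_in01 i j.
by rewrite rhoC_le1 // andbT mulr_ge0 // ltW // (lt_trans ltr01).
Qed.

End EdgeProbabilities.

Theorem lemma2 (R : realType)
  (theta : forall n, 'I_n -> R)
  (r : nat -> nat)
  (rho : forall n, {set 'I_n} -> R)
  (Dcol : forall n, graph n -> {set {set 'I_n}})
  (* rank-1 setting *)
  (Htheta : forall n (i : 'I_n), 0 < theta n i < 1)
  (Hrho : forall n (C : {set 'I_n}), #|C| = r n ->
     1 < rho n C /\
     (forall i j : 'I_n, i \in C -> j \in C -> i != j ->
        rho n C * (theta n i * theta n j) <= 1))
  (* Assumption 3: (theta_max/theta_min)^2 = o(r^{2/3} /\ (n/r) theta_min^2) *)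
  (HA3 : forall eps : R, 0 < eps -> \forall n \near \oo,
     (theta_max (theta n) / theta_min (theta n)) ^+ 2
       <= eps * Num.min ((r n)%:R `^ (2 / 3))
                        ((n%:R / (r n)%:R) * theta_min (theta n) ^+ 2))
  (* r^{1/3} <= |D| <= r for all D in the (random) collection *)
  (HD : forall n (g : graph n) (D : {set 'I_n}), D \in Dcol n g ->
     ((r n)%:R : R) `^ (3^-1) <= #|D|%:R /\ (#|D| <= r n)%N) :
  (* statement under P_0 *)
  ((cvg_in_prob (fun n => p0 (theta n))
      (fun n g => eD (R:=R) g [set: 'I_n] / Ex (p0 (theta n)) (fun g' => eD (R:=R) g' [set: 'I_n])) 1 /\
    cvg_in_prob (fun n => p0 (theta n))
      (fun n g => supD (Dcol n g) (fun D =>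
         `|eDc (R:=R) g D / Ex (p0 (theta n)) (fun g' => eDc (R:=R) g' D) - 1|)) 0) ->
   cvg_in_prob (fun n => p0 (theta n))
      (fun n g => supD (Dcol n g) (fun D =>
         `|Ehat (R:=R) g D / Ex (p0 (theta n)) (fun g' => eD (R:=R) g' D) - 1|)) 0)
  /\
  (* statement under P_C, for any sequence of communities C with |C| = r *)
  (forall C : forall n, {set 'I_n}, (forall n, #|C n| = r n) ->
   let q := fun n => pC (theta n) (rho n (C n)) (C n) in
   (cvg_in_prob q
      (fun n g => eD (R:=R) g [set: 'I_n] / Ex (p0 (theta n)) (fun g' => eD (R:=R) g' [set: 'I_n])) 1 /\
    cvg_in_prob q
      (fun n g => supD (Dcol n g) (fun D =>
         `|eDc (R:=R) g D / Ex (p0 (theta n)) (fun g' => eDc (R:=R) g' D) - 1|)) 0) ->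
   cvg_in_prob q
      (fun n g => supD (Dcol n g) (fun D =>
         `|Ehat (R:=R) g D / Ex (p0 (theta n)) (fun g' => eD (R:=R) g' D) - 1|)) 0).
Proof.
split=> [[x_cvg sup_cvg]|C C_card q [x_cvg sup_cvg]].
- apply: (Ehat_cvg_in_prob Htheta _ HA3 HD x_cvg sup_cvg) => n i j _.
  exact: p0_in01.
- apply: (Ehat_cvg_in_prob Htheta _ HA3 HD x_cvg sup_cvg) => n i j lt_ij.
  have [rho1 rhoC_le1] := Hrho n (C n) (C_card n).
  by apply: pC_in01; rewrite // neq_ltn lt_ij.
Qed.
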